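(* Let $\Gamma=\langle V,(w_u)_{u\in V},\alpha,1\rangle$ be a celebrity game with critical distance $\beta=1$, and let $G=(V,E)$ be the outcome graph of a strategy profile of minimum social cost. Then for any distinct $u,v\in V$: if $w_u+w_v<\alpha$ then $\{u,v\}\notin E$, and if $w_u+w_v>\alpha$ then $\{u,v\}\in E$.
   Context: A celebrity game $\Gamma=\langle V,(w_u)_{u\in V},\alpha,\beta\rangle$ consists of a set of players $V=\{1,\dots,n\}$, celebrity weights $w_u>0$, a link cost $\alpha>0$ and a critical distance $\beta$ with $1\le\beta\le n-1$. A strategy of player $u$ is a set $S_u\subseteq V\setminus\{u\}$; a strategy profile is $S=(S_1,\dots,S_n)$; its outcome graph $G[S]$ is the undirected graph on $V$ with edge set $\{\{u,v\}: u\in S_v\text{ or }v\in S_u\}$. With $d_G$ the graph distance (infinite between different connected components), the cost of player $u$ is $c_u(S)=\alpha|S_u|+\sum_{v:\,d_{G[S]}(u,v)>\beta}w_v$ and the social cost is $C(S)=\sum_{u\in V}c_u(S)$. *)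

From mathcomp Require Import all_boot all_order all_algebra.
Set Implicit Arguments. Unset Strict Implicit. Unset Printing Implicit Defensive.
Import Order.TTheory GRing.Theory Num.Theory.
Local Open Scope ring_scope.

(* Players are V = 'I_n.  A strategy profile assigns to each player u a set
   S u of players (u itself excluded, see [valid_profile]). *)
Definition profile (n : nat) := 'I_n -> {set 'I_n}.

Definition valid_profile n (S : profile n) : Prop := forall u, u \notin S u.

Definition edge n (S : profile n) (u v : 'I_n) : bool := (u \in S v) || (v \in S u).

Fixpoint ball n (S : profile n) (k : nat) (u : 'I_n) : {set 'I_n} :=
  match k with
  | 0 => [set u]
  | k'.+1 => ball S k' u :|: [set v | [exists x in ball S k' u, edge S x v]]
  end.

Definition dist_le n (S : profile n) (u v : 'I_n) (k : nat) : bool := v \in ball S k u.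

Definition player_cost (R : realFieldType) n (w : 'I_n -> R) (alpha : R) (beta : nat)
  (S : profile n) (u : 'I_n) : R :=
  alpha * #|S u|%:R + \sum_(v | ~~ dist_le S u v beta) w v.

Definition social_cost (R : realFieldType) n (w : 'I_n -> R) (alpha : R) (beta : nat)
  (S : profile n) : R :=
  \sum_(u : 'I_n) player_cost w alpha beta S u.

Definition socially_optimal (R : realFieldType) n (w : 'I_n -> R) (alpha : R) (beta : nat)
  (S : profile n) : Prop :=
  valid_profile S /\
  forall S' : profile n, valid_profile S' -> social_cost w alpha beta S <= social_cost w alpha beta S'.

(** With critical distance 1 a player pays exactly for the players it is not adjacent to, so
    the social cost is [alpha] times the number of bought links plus, for every ordered pair
    (a, b) of distinct non-adjacent players, the weight of b.  Deleting an existing link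
    {u, v} saves at least [alpha] and costs [w u + w v]; buying a missing link costs [alpha]
    and saves [w u + w v]. *)

From mathcomp Require Import all_boot all_order all_algebra.
From mathcomp Require Import ring lra.
Set Implicit Arguments. Unset Strict Implicit. Unset Printing Implicit Defensive.
Import Order.TTheory GRing.Theory Num.Theory.
Local Open Scope ring_scope.

Section OutcomeGraph.

Variable n : nat.
Implicit Types (S : profile n) (a b u v : 'I_n).

Lemma edgeC S a b : edge S a b = edge S b a.
Proof. exact: orbC. Qed.

Lemma dist_le1 S a b : dist_le S a b 1 = (b == a) || edge S a b.
Proof.
rewrite /dist_le /= !inE; congr (_ || _).
apply/existsP/idP => [[x /andP[/set1P -> //]] | eab].
by exists a; rewrite inE eqxx.
Qed.

Definition links_agree_off S S' u v :=
  forall a b, (a, b) != (u, v) -> (a, b) != (v, u) -> edge S' a b = edge S a b.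

Definition nb_links S : nat := \sum_a #|S a|.

Definition drop_link S u v : profile n :=
  fun a => if a == u then S u :\ v else if a == v then S v :\ u else S a.

Definition add_link S u v : profile n := fun a => if a == u then v |: S u else S a.

Section Modifications.

Variables (S : profile n) (u v : 'I_n).
Hypotheses (validS : valid_profile S) (uv : u != v).

Let vu : v != u. Proof. by rewrite eq_sym. Qed.

Lemma drop_link_valid : valid_profile (drop_link S u v).
Proof.
move=> a; rewrite /drop_link.
case: eqP => [->|_]; first by rewrite in_setD1 (negbTE (validS u)) andbF.
case: eqP => [->|_]; last exact: validS.
by rewrite in_setD1 (negbTE (validS v)) andbF.
Qed.

Lemma mem_drop_link a b :
  (a \in drop_link S u v b) = [&& (b, a) != (u, v), (b, a) != (v, u) & a \in S b].
Proof.
rewrite /drop_link !xpair_eqE.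
case: (eqVneq b u) => [->|_]; first by rewrite (negbTE uv) in_setD1.
by case: (eqVneq b v) => [->|_]; rewrite ?in_setD1 ?andbF.
Qed.

Lemma drop_link_edge : ~~ edge (drop_link S u v) u v.
Proof. by rewrite /edge !mem_drop_link !eqxx !andbF. Qed.

Lemma drop_link_agree : links_agree_off S (drop_link S u v) u v.
Proof.
move=> a b ab_uv ab_vu; rewrite /edge !mem_drop_link.
by move: ab_uv ab_vu; rewrite !xpair_eqE ![(b == _) && _]andbC => -> ->.
Qed.

Lemma nb_links_drop_link :
  (nb_links (drop_link S u v) + (v \in S u) + (u \in S v))%N = nb_links S.
Proof.
rewrite /nb_links (bigD1 u) //= (bigD1 v) //= [in RHS](bigD1 u) //= [in RHS](bigD1 v) //=.
rewrite /drop_link !eqxx (negbTE vu) [#|S u|](cardsD1 v) [#|S v|](cardsD1 u).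
rewrite (eq_bigr (fun a => #|S a|)) => [|a /andP[au av]]; last by rewrite (negbTE au) (negbTE av).
by rewrite /=; ring.
Qed.

Lemma add_link_valid : valid_profile (add_link S u v).
Proof.
move=> a; rewrite /add_link; case: ifP => [/eqP-> | _]; last exact: validS.
by rewrite in_setU1 negb_or uv validS.
Qed.

Lemma mem_add_link a b : (a \in add_link S u v b) = ((b, a) == (u, v)) || (a \in S b).
Proof.
rewrite /add_link xpair_eqE.
by case: (eqVneq b u) => [->|_]; rewrite ?in_setU1.
Qed.

Lemma add_link_edge : edge (add_link S u v) u v.
Proof. by rewrite /edge !mem_add_link !eqxx orbT. Qed.

Lemma add_link_agree : links_agree_off S (add_link S u v) u v.
Proof.
move=> a b ab_uv ab_vu; rewrite /edge !mem_add_link.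
by move: ab_uv ab_vu; rewrite !xpair_eqE [(b == _) && _]andbC => /negbTE-> /negbTE->.
Qed.

Hypothesis nvu : v \notin S u.

Lemma nb_links_add_link : nb_links (add_link S u v) = (nb_links S).+1.
Proof.
rewrite /nb_links (bigD1 u) //= [in RHS](bigD1 u) //= /add_link eqxx cardsU1 nvu.
rewrite (eq_bigr (fun a => #|S a|)) // => a au; by rewrite (negbTE au).
Qed.

End Modifications.

Section Cost.

Variables (R : realFieldType) (w : 'I_n -> R) (alpha : R).

Definition nonadjacent_weight S : R :=
  \sum_(p : 'I_n * 'I_n | (p.2 != p.1) && ~~ edge S p.1 p.2) w p.2.

Lemma social_cost1 S :
  social_cost w alpha 1 S = alpha * (nb_links S)%:R + nonadjacent_weight S.
Proof.
rewrite /social_cost /player_cost big_split /= -mulr_sumr -natr_sum.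
rewrite /nonadjacent_weight pair_big_dep /=; congr (_ + _).
by apply: eq_bigl => -[a b]; rewrite /= dist_le1 negb_or.
Qed.

Lemma nonadjacent_weight_change S S' u v : u != v -> links_agree_off S S' u v ->
  nonadjacent_weight S' =
  nonadjacent_weight S + ((edge S u v)%:R - (edge S' u v)%:R) * (w u + w v).
Proof.
move=> uv agree; rewrite /nonadjacent_weight !(big_mkcond (fun p => _ && _)) /=.
set F := fun T (p : 'I_n * 'I_n) => if (p.2 != p.1) && ~~ edge T p.1 p.2 then w p.2 else 0.
suff: \sum_p (F S' p - F S p) = ((edge S u v)%:R - (edge S' u v)%:R) * (w u + w v).
  by rewrite sumrB /F /= => <-; rewrite addrC subrK.
have vu_uv : (v, u) != (u, v) by rewrite xpair_eqE eq_sym andbb.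
rewrite (bigD1 (u, v)) // (bigD1 (v, u)) /=; last by rewrite vu_uv.
rewrite big1 => [|[a b] /andP[ab_vu ab_uv]]; last by rewrite /F agree ?subrr.
rewrite /F /= eq_sym uv [edge S v u]edgeC [edge S' v u]edgeC.
by case: (edge S u v); case: (edge S' u v); rewrite /=; lra.
Qed.

Lemma social_cost_change S S' u v : u != v -> links_agree_off S S' u v ->
  social_cost w alpha 1 S' = social_cost w alpha 1 S
    + alpha * ((nb_links S')%:R - (nb_links S)%:R)
    + ((edge S u v)%:R - (edge S' u v)%:R) * (w u + w v).
Proof.
by move=> uv agree; rewrite !social_cost1 (nonadjacent_weight_change uv agree); lra.
Qed.

End Cost.

End OutcomeGraph.

Theorem proposition12 (R : realFieldType) (n : nat) (w : 'I_n -> R) (alpha : R)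
  (S : profile n) :
  (forall u, 0 < w u) -> 0 < alpha -> (1 <= n.-1)%N ->
  socially_optimal w alpha 1 S ->
  forall u v : 'I_n, u != v ->
    (w u + w v < alpha -> ~~ edge S u v) /\
    (alpha < w u + w v -> edge S u v).
Proof.
move=> _ alpha_gt0 _ [validS optS] u v uv; split.
- move=> light; apply/negP => euv.
  have := optS _ (drop_link_valid u v validS).
  rewrite (social_cost_change w alpha uv (@drop_link_agree _ S u v uv)) euv.
  rewrite (negbTE (drop_link_edge S uv)).
  rewrite -(nb_links_drop_link S uv) !natrD.
  move: euv; rewrite /edge.
  by case: (u \in S v); case: (v \in S u) => //= _; lra.
- move=> heavy; apply/negPn/negP => neuv.
  have nvu : v \notin S u by apply: contra neuv; rewrite /edge => ->; rewrite orbT.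
  have := optS _ (add_link_valid validS uv).
  rewrite (social_cost_change w alpha uv (@add_link_agree _ S u v)) (negbTE neuv).
  by rewrite add_link_edge (nb_links_add_link nvu) -natr1 /=; lra.
Qed.
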